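(* Let $b\in\mathcal E_1$ with $b-1$ flat at $0$, let $\theta$ be the inverse germ of $t\mapsto t\,b(t)$, write $\theta(x)=x\,c(x)$, let $\sigma(x)=\theta(x)^4$ with iterates $\sigma^n$ ($\sigma^0=\mathrm{id}$), and let $S(x)=\sum_{n=0}^{\infty}4^{-n}\log c(\sigma^n(x))$ (which converges on a neighbourhood of $0$). Then there exists $\varepsilon>0$ such that for every integer $p\ge0$ for which $S$ is of class $C^p$ on $(-\varepsilon,\varepsilon)$, writing $T=S^{(p)}$ and $\alpha=(\sigma')^p$, one has $$\lim_{n\to\infty}\frac{1}{4^n}\,\alpha(x)\,\alpha(\sigma(x))\cdots\alpha(\sigma^{n-1}(x))\,T(\sigma^n(x))=0\quad\text{for all }|x|<\varepsilon .$$
   Context: $\mathcal E_1$ denotes the ring of smooth function germs at $0\in\mathbb R$. A germ is flat at $0$ if all its derivatives (including its value) vanish at $0$. $S^{(p)}$ denotes the $p$-th derivative of $S$. *)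

From Stdlib Require Import Reals Lra.
From Coquelicot Require Import Coquelicot.
Open Scope R_scope.

Definition smooth_on (f : R -> R) (r : R) : Prop :=
  forall (n : nat) (x : R), Rabs x < r -> ex_derive_n f n x.

Definition flat_at0 (f : R -> R) : Prop :=
  forall n : nat, Derive_n f n 0 = 0.

Definition Cp_on (f : R -> R) (p : nat) (e : R) : Prop :=
  (forall (k : nat) (x : R), (k <= p)%nat -> Rabs x < e -> ex_derive_n f k x) /\
  (forall x : R, Rabs x < e -> continuous (Derive_n f p) x).

Fixpoint orbit_prod (alpha sigma : R -> R) (n : nat) (x : R) : R :=
  match n with
  | O => 1
  | S m => orbit_prod alpha sigma m x * alpha (Nat.iter m sigma x)
  end.

From Stdlib Require Import Reals Lra.
From Coquelicot Require Import Coquelicot.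
Open Scope R_scope.

(* Near 0 the perturbation t (b t - 1) of the identity has derivative close to
   0, so theta is 2-Lipschitz and small, and sigma = theta^4 is a
   1/8-contraction fixing 0.  Hence the orbit sigma^n x tends to 0, so
   T (sigma^n x) tends to T 0, while |sigma'| <= 1 bounds the orbit product by
   1; the factor 4^-n then kills the sequence.  Only the continuity of
   T = S^(p) at 0 is used, and of the hypotheses on b and theta only b 0 = 1,
   the C^2 regularity of b near 0 and theta (x) b (theta x) = x. *)

Lemma continuous_eps_delta (f : R -> R) (x e : R) : continuous f x -> 0 < e ->
  exists d, 0 < d /\ forall y, Rabs (y - x) < d -> Rabs (f y - f x) < e.
Proof.
  intros Hf He.
  destruct (proj1 (filterlim_locally f (f x)) Hf (mkposreal e He)) as [d Hd].
  exists d; split; [apply cond_pos | exact Hd].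
Qed.

Lemma is_lim_seq_0_of_abs_le (u v : nat -> R) :
  (forall n, Rabs (u n) <= v n) -> is_lim_seq v 0 -> is_lim_seq u 0.
Proof.
  intros Huv Hv.
  apply is_lim_seq_abs_0, is_lim_seq_le_le with (u := fun _ => 0) (w := v).
  - intros n; split; [apply Rabs_pos | apply Huv].
  - apply is_lim_seq_const.
  - exact Hv.
Qed.

Lemma Lim_seq_abs_le (u : nat -> R) (M : R) :
  eventually (fun n => Rabs (u n) <= M) -> Rabs (Lim_seq u) <= M.
Proof.
  intros Hu.
  assert (Hle : Rbar_le (Lim_seq u) (Lim_seq (fun _ => M))).
  { apply Lim_seq_le_loc; destruct Hu as [N HN]; exists N.
    intros n Hn; apply (Rabs_le_between (u n) M), HN, Hn. }
  assert (Hge : Rbar_le (Lim_seq (fun _ => - M)) (Lim_seq u)).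
  { apply Lim_seq_le_loc; destruct Hu as [N HN]; exists N.
    intros n Hn; apply (Rabs_le_between (u n) M), HN, Hn. }
  rewrite Lim_seq_const in Hle, Hge.
  destruct (Lim_seq u); simpl in *; try contradiction.
  apply Rabs_le; lra.
Qed.

(* [Derive f x] is by definition the limit of the difference quotients along
   [h = 1/(n+1)], so no differentiability of [f] is needed here. *)
Lemma Derive_abs_le (f : R -> R) (x M d : R) : 0 < d ->
  (forall h, 0 < h < d -> Rabs (f (x + h) - f x) <= M * h) ->
  Rabs (Derive f x) <= M.
Proof.
  intros Hd Hf.
  apply Lim_seq_abs_le.
  assert (Hsmall := proj2 (is_lim_seq_spec _ _) (is_lim_seq_Rbar_loc_seq 0)
                      (mkposreal d Hd)).
  destruct Hsmall as [N HN]; exists N; intros n Hn.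
  specialize (HN n Hn); simpl in HN |- *.
  set (h := 0 + / (INR n + 1)) in *.
  assert (Hh : 0 < h) by (unfold h; pose proof (pos_INR n);
                          rewrite Rplus_0_l; apply Rinv_0_lt_compat; lra).
  rewrite Rminus_0_r, Rabs_pos_eq in HN by lra.
  unfold Rdiv; rewrite Rabs_mult, Rabs_inv, (Rabs_pos_eq h) by lra.
  apply Rmult_le_reg_r with h; [exact Hh|].
  rewrite Rmult_assoc, Rinv_l by lra.
  rewrite Rmult_1_r; apply Hf; lra.
Qed.

Lemma lipschitz_of_derive_abs_le (f df : R -> R) (d L : R) :
  (forall t, Rabs t < d -> is_derive f t (df t)) ->
  (forall t, Rabs t < d -> Rabs (df t) <= L) ->
  forall u v, Rabs u < d -> Rabs v < d -> Rabs (f u - f v) <= L * Rabs (u - v).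
Proof.
  intros Hf Hdf u v Hu Hv.
  assert (Hbetween : forall t, Rmin v u <= t <= Rmax v u -> Rabs t < d).
  { intros t Ht; apply Rabs_lt_between in Hu, Hv; apply Rabs_lt_between.
    unfold Rmin, Rmax in Ht; destruct (Rle_dec v u); lra. }
  destruct (MVT_abs f df v u) as [t [Heq Ht]].
  { intros t Ht; apply is_derive_Reals, Hf, Hbetween, Ht. }
  rewrite Heq; apply Rmult_le_compat_r; [apply Rabs_pos | apply Hdf, Hbetween, Ht].
Qed.

Lemma Rabs_pow_sub_le (a u v : R) (n : nat) : Rabs u <= a -> Rabs v <= a ->
  Rabs (u ^ S n - v ^ S n) <= INR (S n) * a ^ n * Rabs (u - v).
Proof.
  intros Hu Hv.
  assert (Ha : 0 <= a) by (eapply Rle_trans; [apply Rabs_pos | exact Hu]).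
  induction n as [|n IH].
  - replace (u ^ 1 - v ^ 1) with (u - v) by ring; simpl; lra.
  - assert (Hvn : Rabs (v ^ S n) <= a ^ S n)
      by (rewrite <- RPow_abs; apply pow_incr; split; [apply Rabs_pos | exact Hv]).
    replace (Rabs (u ^ S (S n) - v ^ S (S n)))
      with (Rabs (u * (u ^ S n - v ^ S n) + v ^ S n * (u - v))) by (f_equal; simpl; ring).
    eapply Rle_trans; [apply Rabs_triang|]; rewrite !Rabs_mult.
    assert (Hdist := Rabs_pos (u - v)).
    assert (Hfirst : Rabs u * Rabs (u ^ S n - v ^ S n)
                     <= a * (INR (S n) * a ^ n * Rabs (u - v)))
      by (apply Rmult_le_compat; auto using Rabs_pos).
    rewrite S_INR; simpl in *; nra.
Qed.

Lemma orbit_prod_abs_le (alpha sigma : R -> R) (M x : R) :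
  0 <= M -> (forall k, Rabs (alpha (Nat.iter k sigma x)) <= M) ->
  forall n, Rabs (orbit_prod alpha sigma n x) <= M ^ n.
Proof.
  intros HM Halpha n; induction n as [|n IH]; simpl.
  - rewrite Rabs_R1; lra.
  - rewrite Rabs_mult, Rmult_comm.
    apply Rmult_le_compat; auto using Rabs_pos.
Qed.

Section InverseGerm.

Variables (b theta c : R -> R) (r : R).
Hypothesis hr : 0 < r.
Hypothesis hb_smooth : smooth_on b r.
Hypothesis hb0 : b 0 = 1.
Hypothesis htheta_right : forall x, Rabs x < r -> theta x * b (theta x) = x.
Hypothesis hc : forall x, Rabs x < r -> theta x = x * c x.
Hypothesis hc0 : continuous c 0.

Lemma perturbation_lipschitz_half : exists d, 0 < d /\
  forall u v, Rabs u < d -> Rabs v < d ->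
    Rabs (u * (b u - 1) - v * (b v - 1)) <= / 2 * Rabs (u - v).
Proof.
  set (df := fun t => (b t - 1) + t * Derive b t).
  assert (Hr0 : Rabs 0 < r) by (rewrite Rabs_R0; exact hr).
  assert (Hdf : continuous df 0).
  { apply (continuous_plus (fun t => b t - 1) (fun t => t * Derive b t)).
    - apply (continuous_minus b (fun _ => 1)); [|apply continuous_const].
      apply (ex_derive_continuous b), (hb_smooth 1%nat 0 Hr0).
    - apply (continuous_mult (fun t => t) (Derive b)); [apply continuous_id|].
      apply (ex_derive_continuous (Derive b)), (hb_smooth 2%nat 0 Hr0). }
  destruct (continuous_eps_delta df 0 (/ 2) Hdf) as [d [Hd Hnear]]; [lra|].
  assert (Hdf0 : df 0 = 0) by (unfold df; rewrite hb0; ring).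
  exists (Rmin d r); split; [apply Rmin_pos; lra|].
  apply lipschitz_of_derive_abs_le with (df := df).
  - intros t Ht.
    assert (Hb : ex_derive b t)
      by (apply (hb_smooth 1%nat); eapply Rlt_le_trans; [exact Ht | apply Rmin_r]).
    unfold df; auto_derive; [exact Hb | change (fun x => b x) with b; ring].
  - intros t Ht.
    assert (Htd : Rabs (t - 0) < d)
      by (rewrite Rminus_0_r; eapply Rlt_le_trans; [exact Ht | apply Rmin_l]).
    specialize (Hnear t Htd); rewrite Hdf0, Rminus_0_r in Hnear; lra.
Qed.

Lemma theta_0 : theta 0 = 0.
Proof. rewrite hc by (rewrite Rabs_R0; exact hr); ring. Qed.

Lemma theta_continuous_0 : continuous theta 0.
Proof.
  apply continuous_ext_loc with (g := fun x => x * c x).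
  - exists (mkposreal r hr); intros y Hy; symmetry; apply hc.
    cbv [ball] in Hy; simpl in Hy; unfold AbsRing_ball, abs, minus, plus, opp in Hy.
    simpl in Hy; rewrite Ropp_0, Rplus_0_r in Hy; exact Hy.
  - apply (continuous_mult (fun x => x) c); [apply continuous_id | exact hc0].
Qed.

Lemma theta_small (e : R) : 0 < e -> exists d, 0 < d /\
  forall x, Rabs x < d -> Rabs (theta x) < e.
Proof.
  intros He.
  destruct (continuous_eps_delta theta 0 e theta_continuous_0 He) as [d [Hd Hnear]].
  exists d; split; [exact Hd|]; intros x Hx.
  specialize (Hnear x); rewrite theta_0, !Rminus_0_r in Hnear; auto.
Qed.

Lemma theta_lipschitz_near0 : exists d, 0 < d /\
  forall x y, Rabs x < d -> Rabs y < d ->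
    Rabs (theta x - theta y) <= 2 * Rabs (x - y).
Proof.
  destruct perturbation_lipschitz_half as [d0 [Hd0 Hlip]].
  destruct (theta_small d0 Hd0) as [d1 [Hd1 Hsmall]].
  exists (Rmin d1 r); split; [apply Rmin_pos; lra|]; intros x y Hx Hy.
  assert (Hx1 : Rabs x < d1) by (eapply Rlt_le_trans; [exact Hx | apply Rmin_l]).
  assert (Hy1 : Rabs y < d1) by (eapply Rlt_le_trans; [exact Hy | apply Rmin_l]).
  assert (Hxr : Rabs x < r) by (eapply Rlt_le_trans; [exact Hx | apply Rmin_r]).
  assert (Hyr : Rabs y < r) by (eapply Rlt_le_trans; [exact Hy | apply Rmin_r]).
  set (u := theta x); set (v := theta y).
  assert (Hsplit : u - v
                   = (x - y) - (u * (b u - 1) - v * (b v - 1))).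
  { rewrite <- (htheta_right x Hxr), <- (htheta_right y Hyr); fold u v; ring. }
  assert (Hpert := Hlip u v (Hsmall x Hx1) (Hsmall y Hy1)).
  assert (Htri : Rabs (u - v)
                 <= Rabs (x - y) + Rabs (u * (b u - 1) - v * (b v - 1))).
  { rewrite Hsplit, <- (Rabs_Ropp (_ - v * _)); apply Rabs_triang. }
  lra.
Qed.

Lemma theta_pow4_contraction : exists eps, 0 < eps /\
  forall x y, Rabs x < eps -> Rabs y < eps ->
    Rabs (theta x ^ 4 - theta y ^ 4) <= / 8 * Rabs (x - y).
Proof.
  destruct theta_lipschitz_near0 as [d0 [Hd0 Hlip]].
  destruct (theta_small (/ 4)) as [d1 [Hd1 Hsmall]]; [lra|].
  exists (Rmin d0 d1); split; [apply Rmin_pos; lra|]; intros x y Hx Hy.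
  assert (Hx0 : Rabs x < d0) by (eapply Rlt_le_trans; [exact Hx | apply Rmin_l]).
  assert (Hy0 : Rabs y < d0) by (eapply Rlt_le_trans; [exact Hy | apply Rmin_l]).
  assert (Hx1 : Rabs x < d1) by (eapply Rlt_le_trans; [exact Hx | apply Rmin_r]).
  assert (Hy1 : Rabs y < d1) by (eapply Rlt_le_trans; [exact Hy | apply Rmin_r]).
  assert (Hpow := Rabs_pow_sub_le (/ 4) (theta x) (theta y) 3
                    (Rlt_le _ _ (Hsmall x Hx1)) (Rlt_le _ _ (Hsmall y Hy1))).
  assert (Hl := Hlip x y Hx0 Hy0).
  assert (Hdist := Rabs_pos (theta x - theta y)).
  replace (INR 4 * (/ 4) ^ 3) with (/ 16) in Hpow by (simpl; field).
  lra.
Qed.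

End InverseGerm.

Section ContractionOrbit.

Variables (sigma : R -> R) (eps k : R).
Hypothesis hk : 0 <= k < 1.
Hypothesis hsigma0 : sigma 0 = 0.
Hypothesis hsigma_lip : forall x y, Rabs x < eps -> Rabs y < eps ->
  Rabs (sigma x - sigma y) <= k * Rabs (x - y).

Lemma iter_abs_le (x : R) : Rabs x < eps ->
  forall n, Rabs (Nat.iter n sigma x) <= k ^ n * Rabs x.
Proof.
  intros Hx n; induction n as [|n IH]; simpl; [lra|].
  assert (Hkn : k ^ n <= 1)
    by (rewrite <- (pow1 n); apply pow_incr; lra).
  assert (Hin : Rabs (Nat.iter n sigma x) < eps)
    by (pose proof (Rabs_pos x); nra).
  assert (H0 : Rabs 0 < eps) by (rewrite Rabs_R0; pose proof (Rabs_pos x); lra).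
  assert (Hstep := hsigma_lip _ 0 Hin H0).
  rewrite hsigma0, !Rminus_0_r in Hstep.
  pose proof (Rabs_pos (Nat.iter n sigma x)); nra.
Qed.

Lemma iter_abs_lt (x : R) : Rabs x < eps -> forall n, Rabs (Nat.iter n sigma x) < eps.
Proof.
  intros Hx n.
  assert (Hkn : k ^ n <= 1) by (rewrite <- (pow1 n); apply pow_incr; lra).
  assert (Hiter := iter_abs_le x Hx n).
  pose proof (Rabs_pos x); nra.
Qed.

Lemma is_lim_seq_iter (x : R) : Rabs x < eps -> is_lim_seq (fun n => Nat.iter n sigma x) 0.
Proof.
  intros Hx.
  apply is_lim_seq_0_of_abs_le with (v := fun n => k ^ n * Rabs x);
    [apply iter_abs_le, Hx|].
  replace (Finite 0) with (Rbar_mult 0 (Rabs x)) by (simpl; f_equal; ring).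
  apply is_lim_seq_mult'; [apply is_lim_seq_geom | apply is_lim_seq_const].
  rewrite Rabs_pos_eq; lra.
Qed.

Lemma Derive_abs_le_contraction (y : R) : Rabs y < eps -> Rabs (Derive sigma y) <= k.
Proof.
  intros Hy; apply (Derive_abs_le sigma y k (eps - Rabs y)); [lra|].
  intros h Hh.
  assert (Hyh : Rabs (y + h) < eps)
    by (pose proof (Rabs_triang y h); rewrite (Rabs_pos_eq h) in *; lra).
  assert (Hlip := hsigma_lip _ _ Hyh Hy).
  replace (y + h - y) with h in Hlip by ring.
  rewrite (Rabs_pos_eq h) in Hlip by lra; exact Hlip.
Qed.

Lemma is_lim_seq_orbit_prod_0 (T : R -> R) (p : nat) (x : R) :
  continuous T 0 -> Rabs x < eps ->
  is_lim_seq (fun n => / 4 ^ n * orbit_prod (fun y => Derive sigma y ^ p) sigma n x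
                       * T (Nat.iter n sigma x)) 0.
Proof.
  intros HT Hx.
  assert (Hprod : forall n, Rabs (orbit_prod (fun y => Derive sigma y ^ p) sigma n x) <= 1).
  { intros n; rewrite <- (pow1 n); apply orbit_prod_abs_le; [lra|]; intros m.
    rewrite <- RPow_abs, <- (pow1 p); apply pow_incr; split; [apply Rabs_pos|].
    assert (Hd := Derive_abs_le_contraction _ (iter_abs_lt x Hx m)); lra. }
  assert (Hscaled : is_lim_seq
            (fun n => / 4 ^ n * orbit_prod (fun y => Derive sigma y ^ p) sigma n x) 0).
  { apply is_lim_seq_0_of_abs_le with (v := fun n => (/ 4) ^ n).
    - intros n; rewrite Rabs_mult, pow_inv, (Rabs_pos_eq (/ 4 ^ n))
        by (apply Rlt_le, Rinv_0_lt_compat, pow_lt; lra).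
      rewrite <- (Rmult_1_r (/ 4 ^ n)) at 2.
      apply Rmult_le_compat_l; [apply Rlt_le, Rinv_0_lt_compat, pow_lt; lra | apply Hprod].
    - apply is_lim_seq_geom; rewrite Rabs_pos_eq; lra. }
  assert (Horbit : is_lim_seq (fun n => T (Nat.iter n sigma x)) (T 0))
    by (eapply filterlim_comp; [exact (is_lim_seq_iter x Hx) | exact HT]).
  replace (Finite 0) with (Rbar_mult 0 (T 0)) by (simpl; f_equal; ring).
  apply is_lim_seq_mult'; assumption.
Qed.

End ContractionOrbit.

Theorem lemma3p10
  (b theta c : R -> R) (r : R)
  (hr : 0 < r)
  (hb_smooth : smooth_on b r)
  (hb_flat : flat_at0 (fun t => b t - 1))
  (htheta_left : forall t, Rabs t < r -> theta (t * b t) = t)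
  (htheta_right : forall x, Rabs x < r -> theta x * b (theta x) = x)
  (hc : forall x, Rabs x < r -> theta x = x * c x)
  (hc0 : continuous c 0) :
  let sigma := fun x => (theta x) ^ 4 in
  let S := fun x => Series (fun n => / 4 ^ n * ln (c (Nat.iter n sigma x))) in
  exists eps : R, 0 < eps /\
    forall p : nat, Cp_on S p eps ->
      let T := Derive_n S p in
      let alpha := fun x => (Derive sigma x) ^ p in
      forall x : R, Rabs x < eps ->
        is_lim_seq
          (fun n => / 4 ^ n * orbit_prod alpha sigma n x * T (Nat.iter n sigma x))
          0.
Proof.
  intros sigma S.
  assert (hb0 : b 0 = 1) by (pose proof (hb_flat 0%nat) as H0; simpl in H0; lra).
  destruct (theta_pow4_contraction b theta c r hr hb_smooth hb0 htheta_right hc hc0)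
    as [eps [Heps Hcontr]].
  assert (Hsigma0 : sigma 0 = 0) by (unfold sigma; rewrite (theta_0 theta c r hr hc); ring).
  exists eps; split; [exact Heps|].
  intros p HCp T alpha x Hx.
  apply (is_lim_seq_orbit_prod_0 sigma eps (/ 8)); [lra | exact Hsigma0 | exact Hcontr | |exact Hx].
  apply (proj2 HCp 0); rewrite Rabs_R0; exact Heps.
Qed.
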